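(* Let $E$ be a Euclidean space. For closed subsets $V_1,\dots,V_s$ and $W$ of $E$, \[\tau(W\cap V_1\cap\dots\cap V_s)\geqslant\min_{I\subseteq\{1,\dots,s\}}\tau\Big(W\cap\bigcap_{i\in I}\partial V_i\Big).\]
   Context: For nonempty $A\subseteq E$, $d_A(x)=\inf_{a\in A}\|x-a\|$, and $d_\varnothing=+\infty$. For nonempty closed $A$, the medial axis is the closure of $\Delta_A=\{x\in E:\exists a\neq b\in A,\ \|x-a\|=\|x-b\|=d_A(x)\}$, $\tau(A,p)=d_{\Delta_A}(p)$ for $p\in A$, and the reach is $\tau(A)=\inf_{p\in A}\tau(A,p)$; $\tau(\varnothing)=+\infty$. $\partial V_i$ is the topological boundary of $V_i$; the term for $I=\varnothing$ is $\tau(W)$. *)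

From HB Require Import structures.
From mathcomp Require Import all_boot all_order all_algebra.
From mathcomp Require Import all_classical all_reals.
From mathcomp Require Import ereal topology normedtype.
Set Implicit Arguments. Unset Strict Implicit. Unset Printing Implicit Defensive.
Import Order.TTheory GRing.Theory Num.Theory.
Import numFieldNormedType.Exports.
Local Open Scope ring_scope.
Local Open Scope classical_set_scope.

Section Reach.
Variables (R : realType) (n : nat).
Local Notation E := 'rV[R]_n.

Definition enorm (x : E) : R := Num.sqrt (\sum_(i < n) x ord0 i ^+ 2).

(* d_A(x) = inf_{a in A} ||x - a||; the infimum of the empty set is +oo *)
Definition edist (A : set E) (x : E) : \bar R :=
  ereal_inf [set (enorm (x - a))%:E | a in A].

Definition Delta (A : set E) : set E :=
  [set x | exists a b, [/\ A a, A b, a != b,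
     (enorm (x - a))%:E = edist A x & (enorm (x - b))%:E = edist A x]].

Definition medial_axis (A : set E) : set E := closure (Delta A).

Definition local_reach (A : set E) (p : E) : \bar R := edist (medial_axis A) p.

(* tau(A) = inf_{p in A} tau(A,p); tau(empty) = +oo *)
Definition reach (A : set E) : \bar R := ereal_inf [set local_reach A p | p in A].

Definition boundary (A : set E) : set E := closure A `\` interior A.

End Reach.

(* By induction on s it suffices to show
   min (reach W) (reach (W ∩ ∂V)) <= reach (W ∩ V) for closed W and V, and since the
   reach is an infimum of distances to the closure of Delta, it suffices to bound
   d_{W ∩ V}(z) for z with two nearest points a <> b in W ∩ V.  If a and b both lie on
   ∂V, they are two nearest points of z in W ∩ ∂V.  Otherwise, say a is interior to V,
   and suppose reach W > r = |z - a|.  Let t* be the largest t in [0, 1] such that a is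
   still a nearest point of W to a + t (z - a), i.e. d_W = t r there.  Then t* < 1,
   since otherwise a and b are two nearest points of z in W.  Just beyond t*, W has
   points closer than t r; those cannot lie in V, so they stay at distance >= d from a,
   where B(a, d) is in V.  By compactness they yield a second nearest point of W to
   a + t* (z - a), which therefore lies in Delta_W at distance t* r <= r from a, so
   reach W <= r. *)

From Pilot Require Import Defs.
From HB Require Import structures.
From mathcomp Require Import all_boot all_order all_algebra.
From mathcomp Require Import all_classical all_reals.
From mathcomp Require Import ereal topology normedtype derive.
From mathcomp Require Import ring lra.
Import Order.TTheory GRing.Theory Num.Theory.
Import numFieldNormedType.Exports.
Local Open Scope ring_scope.
Local Open Scope classical_set_scope.
Set Implicit Arguments. Unset Strict Implicit. Unset Printing Implicit Defensive.

Section EuclideanNorm.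
Variables (R : realType) (n : nat).
Local Notation E := 'rV[R]_n.
Local Notation N := (@enorm R n).

Definition edot (x y : E) : R := \sum_(i < n) x ord0 i * y ord0 i.

Lemma edot_ge0 (x : E) : 0 <= edot x x.
Proof. by apply: sumr_ge0 => i _; rewrite -expr2 sqr_ge0. Qed.

Lemma enormE (x : E) : N x = Num.sqrt (edot x x).
Proof. by rewrite /enorm /edot; under eq_bigr do rewrite expr2. Qed.

Lemma enorm_ge0 (x : E) : 0 <= N x.
Proof. exact: sqrtr_ge0. Qed.

Lemma enorm_sqr (x : E) : N x ^+ 2 = edot x x.
Proof. by rewrite enormE sqr_sqrtr // edot_ge0. Qed.

Lemma enorm_eq0 (x : E) : N x = 0 -> x = 0.
Proof.
rewrite enormE => /eqP; rewrite sqrtr_eq0 => xx_le0.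
have xx0 : edot x x = 0 by apply/eqP; rewrite eq_le xx_le0 edot_ge0.
apply/rowP => i; rewrite mxE.
have := psumr_eq0P (fun j _ => sqr_ge0 (x ord0 j)) xx0 (i := i) isT.
by move/eqP; rewrite mulf_eq0 orbb => /eqP.
Qed.

Lemma enorm0 : N 0 = 0.
Proof. by rewrite /enorm big1 ?sqrtr0 // => i _; rewrite mxE expr0n. Qed.

Lemma enormZ (t : R) (x : E) : N (t *: x) = `|t| * N x.
Proof.
rewrite !enormE -sqrtr_sqr -sqrtrM ?sqr_ge0 //; congr Num.sqrt.
by rewrite /edot mulr_sumr; apply: eq_bigr => i _; rewrite !mxE; ring.
Qed.

Lemma enorm_distC (x y : E) : N (x - y) = N (y - x).
Proof. by rewrite -opprB -scaleN1r enormZ normrN1 mul1r. Qed.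

Lemma edot_sqrD (x y : E) : edot (x + y) (x + y) = edot x x + 2 * edot x y + edot y y.
Proof.
rewrite /edot mulr_sumr -!big_split /=; apply: eq_bigr => i _.
by rewrite mxE; ring.
Qed.

Lemma edot_Cauchy_Schwarz (x y : E) : edot x y ^+ 2 <= edot x x * edot y y.
Proof.
have [x0|xx_neq0] := eqVneq (edot x x) 0.
  have -> : x = 0 by apply: enorm_eq0; rewrite enormE x0 sqrtr0.
  have dot0 z : edot 0 z = 0 by rewrite /edot big1 // => i _; rewrite mxE mul0r.
  by rewrite !dot0 expr0n mul0r.
have xx_gt0 : 0 < edot x x by rewrite lt_def xx_neq0 edot_ge0.
set A := edot x x; set B := edot x y; set C := edot y y.
have := edot_ge0 ((- B / A) *: x + y); rewrite edot_sqrD.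
have -> : edot ((- B / A) *: x) ((- B / A) *: x) = (- B / A) ^+ 2 * A.
  by rewrite /A /edot mulr_sumr; apply: eq_bigr => i _; rewrite !mxE; ring.
have -> : edot ((- B / A) *: x) y = (- B / A) * B.
  by rewrite /B /edot mulr_sumr; apply: eq_bigr => i _; rewrite mxE mulrA.
have -> : (- B / A) ^+ 2 * A + 2 * (- B / A * B) + C = C - B ^+ 2 / A.
  by field; rewrite gt_eqF.
by rewrite subr_ge0 ler_pdivrMr // mulrC.
Qed.

Lemma ler_enormD (x y : E) : N (x + y) <= N x + N y.
Proof.
rewrite -ler_sqr ?nnegrE ?addr_ge0 ?enorm_ge0 // sqrrD !enorm_sqr edot_sqrD.
rewrite lerD2r lerD2l -(mulr_natl (N x * N y)) ler_pM2l //.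
apply: le_trans (ler_norm _) _.
rewrite -sqrtr_sqr !enormE -sqrtrM ?edot_ge0 //.
exact: ler_wsqrtr (edot_Cauchy_Schwarz x y).
Qed.

Lemma ler_enormB (x y z : E) : N (x - z) <= N (x - y) + N (y - z).
Proof. by rewrite -[x - z](subrKA y) ler_enormD. Qed.

Lemma ler_dist_enorm (x y : E) : `|N x - N y| <= N (x - y).
Proof.
have := ler_enormB x y 0; have := ler_enormB y x 0.
rewrite !subr0 [N (y - x)]enorm_distC ler_norml => *; apply/andP; split; lra.
Qed.

Lemma ler_mxnorm_enorm (x : E) : `|x| <= N x.
Proof.
rewrite (_ : `|x| = mx_norm x) // mx_normrE; apply: bigmax_le => [|[i j] _ /=].
  exact: enorm_ge0.
rewrite (ord1 i) -sqrtr_sqr /enorm; apply: ler_wsqrtr.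
by rewrite (bigD1 j) //= -real_normK ?num_real // lerDl sumr_ge0 // => k _; rewrite sqr_ge0.
Qed.

Lemma ler_enorm_mxnorm : exists2 c : R, 0 < c & forall x : E, N x <= c * `|x|.
Proof.
exists (Num.sqrt n%:R + 1); first by rewrite ltr_wpDl ?sqrtr_ge0.
move=> x; rewrite mulrDl mul1r; apply: ler_wpDr; first exact: normr_ge0.
rewrite -(ger0_norm (normr_ge0 x)) -sqrtr_sqr -sqrtrM ?ler0n // /enorm.
apply: ler_wsqrtr; apply: (@le_trans _ _ (\sum_(i < n) `|x| ^+ 2)); last first.
  by rewrite sumr_const card_ord mulr_natl.
apply: ler_sum => i _.
rewrite -real_normK ?num_real // lerXn2r ?nnegrE ?normr_ge0 //.
rewrite (_ : `|x| = mx_norm x) // mx_normrE.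
exact: (le_bigmax _ (fun ij : 'I_1 * 'I_n => `|x ij.1 ij.2|) (ord0, i)).
Qed.

Lemma enorm_segment (a z : E) (s t : R) :
  N ((a + s *: (z - a)) - (a + t *: (z - a))) = `|s - t| * N (z - a).
Proof. by rewrite opprD addrACA subrr add0r -scalerBl enormZ. Qed.

Lemma near_enorm_lt (x : E) (e : R) : 0 < e -> \forall y \near x, N (x - y) < e.
Proof.
move=> e0; have [c c0 Nc] := ler_enorm_mxnorm.
have := @cvgr_dist_lt _ _ _ _ (nbhs_filter x) id x cvg_id _ (divr_gt0 e0 c0).
apply: filterS => y xy.
by apply: le_lt_trans (Nc _) _; rewrite -ltr_pdivlMl // mulrC.
Qed.

Lemma continuous_enorm_dist (x : E) : continuous (fun y : E => N (x - y)).
Proof.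
move=> y; apply/(cvgrPdist_lt (FF := nbhs_filter y)) => e e0.
apply: filterS (near_enorm_lt y e0) => q yq.
apply: le_lt_trans (ler_dist_enorm _ _) _.
by rewrite opprB addrC addrA subrK enorm_distC.
Qed.

End EuclideanNorm.

Section EuclideanTopology.
Variables (R : realType) (n : nat).
Local Notation E := 'rV[R]_n.
Local Notation N := (@enorm R n).

Lemma closed_enorm_le (x : E) (c : R) : closed [set y | N (x - y) <= c].
Proof.
apply: (@preimage_closed _ _ (fun y : E => N (x - y)) [set r | r <= c]); last exact: closed_le.
by move=> y _; exact: continuous_enorm_dist.
Qed.

Lemma closed_enorm_ge (x : E) (c : R) : closed [set y | c <= N (y - x)].
Proof.
rewrite (_ : [set y | _] = [set y | c <= N (x - y)]); last first.
  by apply/seteqP; split => y /=; rewrite enorm_distC.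
apply: (@preimage_closed _ _ (fun y : E => N (x - y)) [set r | c <= r]); last exact: closed_ge.
by move=> y _; exact: continuous_enorm_dist.
Qed.

Lemma closure_enorm_approx (A : set E) (y : E) (e : R) : closure A y -> 0 < e ->
  exists2 x, A x & N (y - x) < e.
Proof. by move=> clAy /(near_enorm_lt y) /clAy [x [Ax yx]]; exists x. Qed.

Lemma interior_enorm_ball (V : set E) (a : E) : interior V a ->
  exists2 d, 0 < d & forall q, N (q - a) < d -> V q.
Proof.
move=> /nbhs_ballP [d d0 ballV]; exists d => // q qa; apply: ballV.
by rewrite -ball_normE /= (le_lt_trans (ler_mxnorm_enorm _)) // enorm_distC.
Qed.

Lemma enorm_bounded_set (A : set E) (x : E) (c : R) :
  (forall q, A q -> N (x - q) <= c) -> bounded_set A.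
Proof.
move=> Ac; apply: filterS (nbhs_pinfty_ge (num_real (N x + c))) => M cM q Aq /=.
apply: le_trans cM; apply: le_trans (ler_mxnorm_enorm _) _.
have := ler_enormB q x 0; rewrite !subr0 enorm_distC => qx.
by apply: (le_trans qx); rewrite addrC lerD2l Ac.
Qed.

Lemma exists_nearest_point (A : set E) (x a0 : E) : closed A -> A a0 ->
  exists2 p, A p & forall q, A q -> N (x - p) <= N (x - q).
Proof.
move=> clA Aa0; pose K := A `&` [set q | N (x - q) <= N (x - a0)].
have cK : compact K.
  apply: bounded_closed_compact; last first.
    by apply: closedI => //; exact: closed_enorm_le.
  by apply: (@enorm_bounded_set K x (N (x - a0))) => q [].
have K0 : K !=set0 by exists a0; split => /=.
have [p /set_mem [Ap px] p_min] := EVT_min_rV K0 cK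
  (continuous_subspaceT (continuous_enorm_dist (x := x))).
exists p => // q Aq; have [qx|/ltW xq] := leP (N (x - q)) (N (x - a0)).
  by apply: p_min; apply/mem_set.
exact: le_trans px xq.
Qed.

End EuclideanTopology.

Section DistanceAndReach.
Variables (R : realType) (n : nat).
Local Notation E := 'rV[R]_n.
Local Notation N := (@enorm R n).
Local Notation edist := (@Defs.edist R n).

Lemma edist_le_enorm (A : set E) (x a : E) : A a -> (edist A x <= (N (x - a))%:E)%E.
Proof. by move=> Aa; apply: ereal_inf_lbound; exists a. Qed.

Lemma le_edist (A : set E) (x : E) (c : R) :
  (forall a, A a -> c <= N (x - a)) -> (c%:E <= edist A x)%E.
Proof. by move=> Ac; apply: le_ereal_inf_tmp => _ [a Aa <-]; rewrite lee_fin Ac. Qed.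

Lemma edist_lt_enorm (A : set E) (x : E) (c : R) :
  (edist A x < c%:E)%E -> exists2 a, A a & N (x - a) < c.
Proof. by move=> /ereal_inf_lt [_ [a Aa <-]]; rewrite lte_fin; exists a. Qed.

Lemma edist_ge0 (A : set E) (x : E) : (0 <= edist A x)%E.
Proof. by apply: le_edist => a _; exact: enorm_ge0. Qed.

Lemma reach_le_two_nearest (A : set E) (x a b : E) (r : R) :
  A a -> A b -> a != b -> (r%:E <= edist A x)%E ->
  N (x - a) <= r -> N (x - b) <= r -> (reach A <= r%:E)%E.
Proof.
move=> Aa Ab ab rx xa xb.
have nearest c : A c -> N (x - c) <= r -> (N (x - c))%:E = edist A x.
  move=> Ac xc; apply/eqP; rewrite eq_le edist_le_enorm // andbT.
  by apply: le_trans rx; rewrite lee_fin.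
have Dx : Delta A x by exists a, b; split; rewrite ?nearest.
have /le_trans -> // : (reach A <= local_reach A a)%E.
  by apply: ereal_inf_lbound; exists a.
apply: le_trans (edist_le_enorm _ (subset_closure Dx)) _.
by rewrite enorm_distC lee_fin.
Qed.

Lemma le_reach_Delta (A : set E) (m : \bar R) :
  (forall z, Delta A z -> m <= edist A z)%E -> (m <= reach A)%E.
Proof.
move=> mD; apply: le_ereal_inf_tmp => _ [p Ap <-].
apply: le_ereal_inf_tmp => _ [y Dy <-]; apply/lee_addgt0Pr => e e0.
have [z Dz yz] := closure_enorm_approx Dy e0.
apply: le_trans (mD z Dz) _; apply: le_trans (edist_le_enorm z Ap) _.
rewrite -EFinD lee_fin enorm_distC; apply: le_trans (ler_enormB p y z) _.
by rewrite lerD2l ltW.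
Qed.

End DistanceAndReach.

Section InteriorNearestPoint.
Variables (R : realType) (n : nat).
Local Notation E := 'rV[R]_n.
Local Notation N := (@enorm R n).
Local Notation edist := (@Defs.edist R n).
Variables (W V : set E) (z a b : E).
Hypotheses (clW : closed W) (Wa : W a) (Wb : W b) (neq_ab : a != b)
  (zb_za : N (z - b) = N (z - a)) (intVa : interior V a)
  (a_nearest : forall c, W c -> V c -> N (z - a) <= N (z - c)).

Local Notation r := (N (z - a)).
Let seg (t : R) := a + t *: (z - a).

Let enorm_seg_a t : 0 <= t -> N (seg t - a) = t * r.
Proof. by move=> t0; rewrite /seg addrAC subrr add0r enormZ ger0_norm. Qed.

Let seg1 : seg 1 = z.
Proof. by rewrite /seg scale1r addrC subrK. Qed.

Let enorm_seg_z t : t <= 1 -> N (z - seg t) = (1 - t) * r.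
Proof. by move=> t1; rewrite -{1}seg1 /seg enorm_segment ger0_norm ?subr_ge0. Qed.

Let r_gt0 : 0 < r.
Proof.
rewrite lt_def enorm_ge0 andbT; apply: contra neq_ab => /eqP r0.
have za := subr0_eq (enorm_eq0 r0); have zb := subr0_eq (enorm_eq0 (etrans zb_za r0)).
by rewrite -za -zb.
Qed.

Let seg_far t c : 0 <= t <= 1 -> W c -> V c -> t * r <= N (seg t - c).
Proof.
move=> /andP [t0 t1] Wc Vc; have := ler_enormB z (seg t) c.
rewrite enorm_seg_z // mulrBl mul1r; have := a_nearest Wc Vc.
set u := t * r; set v := N (seg t - c); lra.
Qed.

Let S := [set t | 0 <= t <= 1 /\ ((t * r)%:E <= edist W (seg t))%E].
Let ts := sup S.

Let S0 : S 0.
Proof. by split; [rewrite lexx ler01 | rewrite mul0r edist_ge0]. Qed.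

Let S_has_sup : has_sup S.
Proof. by split; [exists 0 | exists 1 => t [/andP [_ ?] _]]. Qed.

Let ts_ge0 : 0 <= ts.
Proof. exact: (sup_upper_bound S_has_sup S0). Qed.

Let ts_le1 : ts <= 1.
Proof. by apply: sup_le_ub; [case: S_has_sup | move=> t [/andP [_ ?] _]]. Qed.

Let S_sup : S ts.
Proof.
split; first by rewrite ts_ge0 ts_le1.
apply: le_edist => q Wq; apply/ler_addgt0Pr => e e0.
have e2r : 0 < e / (2 * r) by rewrite divr_gt0 // mulr_gt0 // r_gt0.
have [s [/andP [s0 s1] sS] ts_s] := sup_adherent e2r S_has_sup.
have s_ts : s <= ts by apply: sup_upper_bound => //; split => //; apply/andP.
have sq : s * r <= N (seg s - q).
  by rewrite -lee_fin; apply: le_trans sS (edist_le_enorm _ Wq).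
have := ler_enormB (seg s) (seg ts) q.
rewrite enorm_segment distrC ger0_norm ?subr_ge0 //.
have : (ts - s) * r < e / 2.
  by rewrite -ltr_pdivlMr ?r_gt0 // -mulrA -invfM ltrBlDr addrC -ltrBlDr.
have -> : ts * r = s * r + (ts - s) * r by ring.
set u := (ts - s) * r; set v := N (seg ts - q); lra.
Qed.

Let sup_lt1 : ((r%:E < reach W)%E) -> ts < 1.
Proof.
move=> reach_gt; rewrite lt_neqAle ts_le1 andbT; apply/eqP => ts1.
have [_] := S_sup; rewrite ts1 mul1r seg1 => r_le_dz.
have zb_le : N (z - b) <= r by rewrite zb_za.
have := reach_le_two_nearest Wa Wb neq_ab r_le_dz (lexx _) zb_le.
by rewrite leNgt reach_gt.
Qed.

Let far_points t : ts < t <= 1 ->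
  exists2 q, W q /\ ~ V q & N (seg ts - q) < ts * r + 2 * ((t - ts) * r).
Proof.
move=> /andP [ts_t t1]; have t0 : 0 <= t by apply: le_trans ts_ge0 (ltW ts_t).
have [q Wq tq] : exists2 q, W q & N (seg t - q) < t * r.
  apply: edist_lt_enorm; rewrite ltNge; apply/negP => tS.
  have St : S t by split => //; rewrite t0 t1.
  by move: ts_t; rewrite ltNge (sup_upper_bound S_has_sup St).
exists q.
  split => // Vq; have := seg_far (t := t) _ Wq Vq; rewrite t0 t1 => /(_ isT).
  by rewrite leNgt tq.
have := ler_enormB (seg ts) (seg t) q.
rewrite enorm_segment distrC gtr0_norm ?subr_gt0 //.
move: tq; have -> : t * r = ts * r + (t - ts) * r by ring.
set u := (t - ts) * r; set v := N (seg t - q); lra.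
Qed.

Lemma reach_le_interior_nearest : (reach W <= r%:E)%E.
Proof.
rewrite leNgt; apply/negP => reach_gt.
have [d d0 ballV] := interior_enorm_ball intVa.
pose K := W `&` [set q | d <= N (q - a)].
have approxK e : 0 < e -> exists2 q, K q & N (seg ts - q) < ts * r + e.
  move=> e0; pose h := Num.min (1 - ts) (e / (2 * r)).
  have h0 : 0 < h by rewrite lt_min subr_gt0 sup_lt1 // divr_gt0 // mulr_gt0 // r_gt0.
  have [|q [Wq Vq] tsq] := far_points (t := ts + h).
    by rewrite ltrDl h0 -lerBrDl ge_min lexx.
  exists q; first by split => //=; rewrite leNgt; apply/negP => /ballV.
  apply: lt_le_trans tsq _; rewrite lerD2l (_ : ts + h - ts = h); last by ring.
  have : h <= e / (2 * r) by rewrite ge_min lexx orbT.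
  rewrite ler_pdivlMr ?mulr_gt0 ?r_gt0 //; apply: le_trans.
  by rewrite le_eqVlt (_ : 2 * (h * r) = h * (2 * r)) ?eqxx //; ring.
have [q0 Kq0 _] := approxK 1 ltr01.
have clK : closed K by apply: closedI => //; exact: closed_enorm_ge.
have [p [Wp dp] p_min] := exists_nearest_point (seg ts) clK Kq0.
have p_near : N (seg ts - p) <= ts * r.
  apply/ler_addgt0Pr => e /approxK [q Kq tsq].
  exact: le_trans (p_min q Kq) (ltW tsq).
have neq_ap : a != p by apply: contraTneq dp => <-; rewrite subrr enorm0 -ltNge.
have [_ ts_le_d] := S_sup.
have a_near : N (seg ts - a) <= ts * r by rewrite enorm_seg_a.
have := reach_le_two_nearest Wa Wp neq_ap ts_le_d a_near p_near.
rewrite leNgt => /negP; apply; apply: le_lt_trans reach_gt.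
by rewrite lee_fin ler_piMl ?enorm_ge0.
Qed.

End InteriorNearestPoint.

Lemma set_mem_cons (T : eqType) (x : T) (s : seq T) : [set` x :: s] = x |` [set` s].
Proof.
apply/seteqP; split => y /=; rewrite in_cons; first by case/orP => [/eqP|]; [left|right].
by case=> [->|ys]; rewrite ?eqxx ?ys ?orbT.
Qed.

Lemma set_mem_setU1 (T : finType) (x : T) (A : {set T}) : [set` x |: A] = x |` [set` A].
Proof.
apply/seteqP; split => y /=; rewrite in_setU1; first by case/orP => [/eqP|]; [left|right].
by case=> [->|yA]; rewrite ?eqxx ?yA ?orbT.
Qed.

Section ReachIntersection.
Variables (R : realType) (n : nat).
Local Notation E := 'rV[R]_n.
Local Notation N := (@enorm R n).
Local Notation edist := (@Defs.edist R n).

Lemma closed_boundary (V : set E) : closed (boundary V).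
Proof. by apply: closedI; [exact: closed_closure | rewrite closedC; exact: open_interior]. Qed.

Lemma reach_setI_Delta (W V : set E) (z : E) : closed W -> closed V ->
  Delta (W `&` V) z ->
  (Order.min (reach W) (reach (W `&` boundary V)) <= edist (W `&` V) z)%E.
Proof.
move=> clW clV [a [b [[Wa Va] [Wb Vb] neq_ab za zb]]].
have nearest c : W c -> V c -> N (z - a) <= N (z - c).
  by move=> Wc Vc; rewrite -lee_fin za; apply: edist_le_enorm.
have interior_of c : V c -> ~ boundary V c -> interior V c.
  by move=> Vc Vc_nbd; apply: contrapT => ?; apply: Vc_nbd; split => //; exact: subset_closure.
have za_zb : N (z - b) = N (z - a) by apply: EFin_inj; rewrite zb za.
have reachW c c' : W c -> W c' -> c != c' -> N (z - c') = N (z - c) ->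
    N (z - c) = N (z - a) -> V c -> ~ boundary V c -> (reach W <= (N (z - a))%:E)%E.
  move=> Wc Wc' neq_cc' zc'_zc zc_za Vc Vc_bd; rewrite -zc_za.
  apply: reach_le_interior_nearest Wc Wc' neq_cc' zc'_zc _ _ => //.
    exact: interior_of.
  by move=> d Wd Vd; rewrite zc_za; exact: nearest.
rewrite -za ge_min; apply/orP.
have [Va_bd|Va_nbd] := pselect (boundary V a); first last.
  by left; exact: (reachW a b).
have [Vb_bd|Vb_nbd] := pselect (boundary V b); first last.
  by left; apply: (reachW b a) => //; rewrite eq_sym.
right; apply: reach_le_two_nearest (conj Wa Va_bd) (conj Wb Vb_bd) neq_ab _ (lexx _) _.
  apply: le_edist => c [Wc [Vc_cl _]]; apply: nearest Wc _.
  by rewrite ((closure_id V).1 clV).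
by rewrite za_zb.
Qed.

Lemma reach_setI (W V : set E) : closed W -> closed V ->
  (Order.min (reach W) (reach (W `&` boundary V)) <= reach (W `&` V))%E.
Proof. by move=> clW clV; apply: le_reach_Delta => z; exact: reach_setI_Delta. Qed.

Lemma reach_bigcap (I : finType) (V : I -> set E) (l : seq I) (W : set E) :
  (forall i, closed (V i)) -> closed W ->
  exists J : {set I},
    (reach (W `&` \bigcap_(i in [set` J]) boundary (V i))
      <= reach (W `&` \bigcap_(i in [set` l]) V i))%E.
Proof.
move=> clV; elim: l W => [|j l IHl] W clW.
  exists finset.set0.
  have -> : [set` (finset.set0 : {set I})] = set0.
    by apply/seteqP; split => i //=; rewrite finset.in_set0.
  have -> : [set` ([::] : seq I)] = set0 by apply/seteqP; split.
  by rewrite !bigcap_set0.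
have clWj : closed (W `&` V j) by apply: closedI.
have [J le_J] := IHl _ clWj.
have clWJ : closed (W `&` \bigcap_(i in [set` J]) boundary (V i)).
  by apply: closedI => //; apply: closed_bigI => i _; exact: closed_boundary.
rewrite set_mem_cons bigcap_setU1 setIA.
have := reach_setI clWJ (clV j); rewrite ge_min => /orP [le_WJ | le_WJj].
  by exists J; apply: le_trans le_WJ _; rewrite setIAC; exact: le_J.
exists (j |: J); rewrite set_mem_setU1 bigcap_setU1 [boundary _ `&` _]setIC setIA.
by apply: le_trans le_WJj _; rewrite setIAC; exact: le_J.
Qed.

End ReachIntersection.

Unset Implicit Arguments.

Theorem corollary2p6 (R : realType) (n s : nat)
    (V : 'I_s -> set 'rV[R]_n) (W : set 'rV[R]_n) :
  (forall i, closed (V i)) -> closed W ->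
  (\big[Order.min/+oo%E]_(I : {set 'I_s})
      reach (W `&` \bigcap_(i in [set i | i \in I]) boundary (V i))
    <= reach (W `&` \bigcap_(i in [set: 'I_s]) V i))%E.
Proof.
move=> clV clW; have [J le_J] := reach_bigcap (enum 'I_s) clV clW.
have -> : [set: 'I_s] = [set` enum 'I_s] by apply/seteqP; split => i //= _; rewrite mem_enum.
by apply: le_trans le_J; exact: bigmin_le.
Qed.
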